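(* Let $\Delta$ be a quasi-forest on $[n]$ with $s+1$ facets, of dimension $d-1$, with $f$-vector $(f_0,\ldots,f_{d-1})$, and put $f_{-1}=1$. Let $F_{s+1}, F_s, \ldots, F_1$ be a leaf order of $\Delta$ (so that for each $1\le j\le s$, $F_j$ is a leaf of $\langle F_{s+1},F_s,\ldots,F_j\rangle$). For each $1\le j\le s$ let $G_j$ be a branch of the leaf $F_j$ in $\langle F_{s+1},F_s,\ldots,F_j\rangle$. Let $\delta_j=|F_j|$ for $1\le j\le s+1$ and $e_j=|F_j\cap G_j|$ for $1\le j\le s$. Then: (a) $\sum_{i=0}^{d} f_{i-1}x^i = \sum_{j=1}^{s+1}(1+x)^{\delta_j} - \sum_{j=1}^{s}(1+x)^{e_j}$; (b) if $k_1\cdots k_{s+1}$ is a permutation of $[s+1]$ with $0<\delta_{k_1}\le\cdots\le\delta_{k_s}\le\delta_{k_{s+1}}=d$ and $\ell_1\cdots\ell_s$ is a permutation of $[s]$ with $0\le e_{\ell_1}\le\cdots\le e_{\ell_s}$, then $e_{\ell_j}<\delta_{k_j}$ for all $1\le j\le s$.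
   Context: A simplicial complex $\Delta$ on $[n]$ is a collection of subsets of $[n]$ containing all singletons and closed under taking subsets; $\dim\Delta=d-1$ where $d$ is the maximal face size; facets are maximal faces; $f_i$ is the number of faces with $i+1$ elements. For facets $F_{i_1},\ldots,F_{i_q}$, $\langle F_{i_1},\ldots,F_{i_q}\rangle$ is the subcomplex of all faces contained in some $F_{i_j}$. A facet $F$ of a complex is a leaf if there is another facet $G\neq F$ (a branch of $F$) with $H\cap F\subset G\cap F$ for all facets $H\neq F$. A quasi-forest is a simplicial complex whose facets admit an ordering (a leaf order) $H_1,\ldots,H_m$ such that for each $1<j\le m$, $H_j$ is a leaf of $\langle H_1,\ldots,H_j\rangle$. *)

From mathcomp Require Import all_boot all_order all_algebra.
Set Implicit Arguments. Unset Strict Implicit. Unset Printing Implicit Defensive.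
Import GRing.Theory.

Section Defs.
Variable n : nat.
Notation V := ('I_n).

Definition is_simplicial_complex (D : {set {set V}}) : Prop :=
  (forall v : V, [set v] \in D) /\
  (forall A B : {set V}, B \in D -> A \subset B -> A \in D).

Definition facets (D : {set {set V}}) : {set {set V}} :=
  [set F in D | [forall B in D, (F \subset B) ==> (B == F)]].

(* d = maximal face size, so dim D = d - 1 *)
Definition maxface (D : {set {set V}}) : nat := \max_(F in D) #|F|.

(* f_i = number of faces with i+1 elements; fm1 D i = f_{i-1}, with f_{-1}=1 *)
Definition fvec (D : {set {set V}}) (i : nat) : nat :=
  #|[set A in D | #|A| == i.+1]|.
Definition fm1 (D : {set {set V}}) (i : nat) : nat :=
  if i is j.+1 then fvec D j else 1.

Definition gen (S : {set {set V}}) : {set {set V}} :=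
  [set A : {set V} | [exists B in S, A \subset B]].

Definition is_branch (C : {set {set V}}) (F G : {set V}) : Prop :=
  [/\ F \in facets C, G \in facets C, G != F &
      forall H, H \in facets C -> H != F -> H :&: F \subset G :&: F].

Definition is_leaf (C : {set {set V}}) (F : {set V}) : Prop :=
  exists G, is_branch C F G.

Definition is_quasi_forest (D : {set {set V}}) : Prop :=
  is_simplicial_complex D /\
  exists Hs : seq {set V},
    [/\ uniq Hs, (forall H, (H \in Hs) = (H \in facets D)) &
        forall j, 1 < j <= size Hs ->
          is_leaf (gen [set H in take j Hs]) (nth set0 Hs j.-1)].
End Defs.

From mathcomp Require Import all_boot all_order all_algebra zify.
Import GRing.Theory.
Set Implicit Arguments. Unset Strict Implicit. Unset Printing Implicit Defensive.

(* The faces of <F_j, ..., F_{s+1}> are the subsets of F_j together with the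
   faces of <F_{j+1}, ..., F_{s+1}>, and since F_j is a leaf with branch G_j
   the two families share exactly the subsets of F_j :&: G_j.  Inclusion-
   exclusion on the generating polynomial \sum_A x^|A| therefore peels off
   (1+x)^delta_j - (1+x)^e_j for each leaf, which gives (a).
   For (b), every i with t <= e_i has t < delta_i, and so does the branch of
   the largest such i, which is not one of them: more facets have size > t
   than leaves have e_i >= t.  If e_{l_j} >= delta_{k_j} = t, sortedness would
   give at least s - j + 1 of the latter but at most s + 1 - j of the former. *)

Section FacePolynomial.
Local Open Scope ring_scope.
Variable T : finType.

Definition face_poly (C : {set {set T}}) : {poly int} := \sum_(A in C) 'X^#|A|.

Lemma coef_face_poly (C : {set {set T}}) i :
  (face_poly C)`_i = #|[set A in C | #|A| == i]|%:R.
Proof.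
rewrite coef_sum -sum1_card natr_sum [RHS]big_mkcond [LHS]big_mkcond /=.
by apply: eq_bigr => A _; rewrite inE coefXn eq_sym; case: (A \in C); case: eqP.
Qed.

Lemma face_polyE (C : {set {set T}}) N : (forall A, A \in C -> #|A| <= N)%N ->
  face_poly C = \sum_(i < N.+1) (#|[set A in C | #|A| == i]|%:R : int) *: 'X^i.
Proof.
move=> leN; rewrite -(poly_def _ (fun i => #|[set A in C | #|A| == i]|%:R)).
apply/polyP => i; rewrite coef_face_poly coef_poly; case: ltnP => // ltNi.
suff -> : [set A in C | #|A| == i] = set0 by rewrite cards0.
by apply/setP => A; rewrite !inE; apply/andP => -[/leN ? /eqP ?]; lia.
Qed.

Lemma face_poly_powerset (B : {set T}) : face_poly (powerset B) = ('X + 1) ^+ #|B|.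
Proof.
rewrite (@face_polyE _ #|B|) => [|A]; last by rewrite powersetE => /subset_leq_card.
rewrite exprD1n; apply: eq_bigr => i _; rewrite -scaler_nat -cards_draws.
by congr (_%:R *: _); apply: eq_card => A; rewrite !inE ?powersetE.
Qed.

Lemma face_polyU (C1 C2 : {set {set T}}) :
  face_poly (C1 :|: C2) = face_poly C1 + face_poly C2 - face_poly (C1 :&: C2).
Proof.
rewrite /face_poly (big_setID C1) (big_setID C1 (A := C2)) /=.
rewrite setUK setDUl setDv set0U setIC.
by rewrite [\sum_(i in C1 :&: C2) _ + _]addrC addrA addrK.
Qed.

End FacePolynomial.

Section Generated.
Local Open Scope ring_scope.
Variable n : nat.
Notation V := 'I_n.
Implicit Types (A B H : {set V}) (S C D : {set {set V}}).

Definition antichain S := {in S &, forall B B', B \subset B' -> B = B'}.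

Lemma facetP D H :
  reflect (H \in D /\ forall B, B \in D -> H \subset B -> B = H) (H \in facets D).
Proof.
rewrite inE; apply: (iffP andP) => [[HD /forallP maxH]|[HD maxH]]; split => //.
  by move=> B BD HB; apply/eqP; move: (maxH B); rewrite BD HB.
by apply/forallP => B; apply/implyP => BD; apply/implyP => /(maxH B BD) ->.
Qed.

Lemma facets_antichain D : antichain (facets D).
Proof. by move=> B B' /facetP[_ maxB] /facetP[B'D _] /(maxB B' B'D). Qed.

Lemma genP S A : reflect (exists2 B, B \in S & A \subset B) (A \in gen S).
Proof.
rewrite inE; apply: (iffP existsP) => [[B /andP[]]|[B BS AB]]; first by exists B.
by exists B; rewrite BS.
Qed.

Lemma gen_set1 B : gen [set B] = powerset B.
Proof.
apply/setP => A; rewrite powersetE; apply/genP/idP => [[B']|AB].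
  by rewrite inE => /eqP ->.
by exists B; rewrite ?inE.
Qed.

Lemma genU S1 S2 : gen (S1 :|: S2) = gen S1 :|: gen S2.
Proof.
apply/setP => A; rewrite in_setU; apply/genP/orP.
  by case=> B; rewrite inE => /orP[] BS AB; [left|right]; apply/genP; exists B.
by case=> /genP[B BS AB]; exists B; rewrite // inE BS ?orbT.
Qed.

Lemma facets_gen S : antichain S -> facets (gen S) = S.
Proof.
move=> antiS; apply/setP => H; apply/facetP/idP => [[/genP[B BS HB] maxH]|HS].
  by rewrite -(maxH B) //; apply/genP; exists B.
split=> [|B /genP[B' B'S BB'] HB]; first by apply/genP; exists H.
have HB' : H = B' by apply: antiS => //; apply: subset_trans BB'.
by apply/eqP; rewrite eqEsubset HB andbT HB'.
Qed.

Lemma gen_facets D : (forall A B, B \in D -> A \subset B -> A \in D) ->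
  gen (facets D) = D.
Proof.
move=> closedD; apply/setP => A; apply/genP/idP => [[B /facetP[BD _]]|AD].
  exact: closedD.
have [B /andP[BD AB] maxB] :=
  @arg_maxnP _ A [pred B | (B \in D) && (A \subset B)] (fun B => #|B|)
    (introT andP (conj AD (subxx A))).
exists B => //; apply/facetP; split=> // B' B'D BB'.
apply/eqP; rewrite eq_sym eqEcard BB' /=.
by apply: maxB; rewrite /= B'D (subset_trans AB BB').
Qed.

Lemma properI_facets C A B :
  A \in facets C -> B \in facets C -> A != B -> A :&: B \proper A.
Proof.
move=> /facetP[_ maxA] /facetP[BC _] neqAB.
rewrite properE subsetIl subsetI subxx /=.
by apply: contra neqAB => /(maxA B BC) ->.
Qed.

Lemma gen_cap_powerset_leaf S F G : F \notin S -> antichain (F |: S) ->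
  is_branch (gen (F |: S)) F G -> gen S :&: powerset F = powerset (F :&: G).
Proof.
move=> FnS anti [_ Gfacet GneF branchG]; rewrite facets_gen // in branchG Gfacet.
apply/setP => A; rewrite in_setI !powersetE subsetI.
apply/andP/andP => [[/genP[B BS AB] AF]|[AF AG]]; split=> //.
  have BneF : B != F by apply: contraNneq FnS => <-.
  apply: subset_trans (subsetIl G F).
  by apply: subset_trans (branchG B (setU1r _ BS) BneF); rewrite subsetI AB AF.
apply/genP; exists G => //.
by move: Gfacet; rewrite in_setU1 (negbTE GneF).
Qed.

Lemma face_poly_gen_leaf S F G : F \notin S -> antichain (F |: S) ->
  is_branch (gen (F |: S)) F G ->
  face_poly (gen (F |: S)) =
    ('X + 1) ^+ #|F| + face_poly (gen S) - ('X + 1) ^+ #|F :&: G|.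
Proof.
move=> FnS anti branchG.
rewrite genU gen_set1 face_polyU setIC (gen_cap_powerset_leaf FnS anti branchG).
by rewrite !face_poly_powerset.
Qed.

Lemma face_poly_fm1 D : set0 \in D ->
  face_poly D = \sum_(i < (maxface D).+1) ((fm1 D i)%:R : int) *: 'X^i.
Proof.
move=> D0; rewrite (@face_polyE _ D (maxface D)); last first.
  by move=> A AD; apply: leq_bigmax_cond.
apply: eq_bigr => -[[|i] _] _ //=; congr (_%:R *: _).
rewrite -(cards1 (set0 : {set V})); apply: eq_card => A.
by rewrite !inE cards_eq0; case: eqP => [->|]; rewrite ?D0 ?andbF.
Qed.

End Generated.

Section LeafOrder.
Local Open Scope ring_scope.
Variables (n s : nat) (D : {set {set 'I_n}}) (F G : nat -> {set 'I_n}).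

Definition facets_from j :=
  [set H : {set 'I_n} | [exists i : 'I_(s.+2), (j <= i)%N && (H == F i)]].

Hypothesis F_inj : {in [pred j : nat | (1 <= j <= s.+1)%N]&, injective F}.
Hypothesis F_facets :
  forall H, H \in facets D <-> exists2 j, (1 <= j <= s.+1)%N & H = F j.
Hypothesis G_branch :
  forall j, (1 <= j <= s)%N -> is_branch (gen (facets_from j)) (F j) (G j).

Lemma facets_fromP j H :
  reflect (exists2 i, (j <= i <= s.+1)%N & H = F i) (H \in facets_from j).
Proof.
rewrite inE; apply: (iffP existsP) => [[i /andP[ji /eqP ->]]|[i /andP[ji lti] ->]].
  by exists i; rewrite // ji -ltnS ltn_ord.
by exists (Ordinal (lti : (i < s.+2)%N)); rewrite ji eqxx.
Qed.

Lemma facets_from1 : facets D = facets_from 1.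
Proof. by apply/setP => H; apply/idP/facets_fromP => /F_facets. Qed.

Lemma facets_from_antichain j : (0 < j)%N -> antichain (facets_from j).
Proof.
move=> j_gt0 B B' /facets_fromP[i hi ->] /facets_fromP[i' hi' ->].
by apply: facets_antichain; apply/F_facets; [exists i | exists i'] => //; lia.
Qed.

Lemma facets_fromS j : (j <= s)%N -> facets_from j = F j |: facets_from j.+1.
Proof.
move=> le_js; apply/setP => H; rewrite in_setU1.
apply/facets_fromP/orP => [[i hi ->]|[/eqP ->|/facets_fromP[i hi ->]]].
- have [<-|neq_ji] := eqVneq j i; first by left.
  by right; apply/facets_fromP; exists i => //; lia.
- by exists j => //; lia.
- by exists i => //; lia.
Qed.

Lemma facets_from_last : facets_from s.+1 = [set F s.+1].
Proof.
apply/setP => H; rewrite inE; apply/facets_fromP/eqP => [[i hi ->]|->].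
  by have -> : i = s.+1 by lia.
by exists s.+1 => //; rewrite leqnn.
Qed.

Lemma leaf_notin_facets_from j : (1 <= j <= s)%N -> F j \notin facets_from j.+1.
Proof.
move=> hj; apply/facets_fromP => -[i hi eqF].
have : j = i by apply: F_inj; rewrite ?inE //=; lia.
lia.
Qed.

Lemma face_poly_facets_from j : (1 <= j <= s.+1)%N ->
  face_poly (gen (facets_from j)) =
    \sum_(j <= i < s.+2) ('X + 1) ^+ #|F i|
    - \sum_(j <= i < s.+1) ('X + 1) ^+ #|F i :&: G i|.
Proof.
move=> hj; move Em : (s.+1 - j)%N => m; elim: m j hj Em => [|m IH] j hj Em.
  have -> : j = s.+1 by lia.
  rewrite facets_from_last gen_set1 face_poly_powerset.
  by rewrite big_nat1 big_geq // subr0.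
have le_js : (j <= s)%N by lia.
have := G_branch (j := j) ltac:(lia); rewrite facets_fromS // => branch_j.
have anti_j : antichain (F j |: facets_from j.+1).
  by rewrite -facets_fromS //; apply: facets_from_antichain; lia.
rewrite (face_poly_gen_leaf (leaf_notin_facets_from _) anti_j branch_j) ?IH; [|lia..].
rewrite (@big_ltn _ _ _ j s.+2) ?(@big_ltn _ _ _ j s.+1) ?ltnS ?(leqW le_js) //.
by rewrite addrA opprD addrA [RHS]addrAC.
Qed.

Lemma leaf_cardI_lt j : (1 <= j <= s)%N -> (#|F j :&: G j| < #|F j|)%N.
Proof.
case/G_branch => Ffacet Gfacet GneF _.
by rewrite proper_card // (properI_facets Ffacet Gfacet) // eq_sym.
Qed.

Lemma branch_cardI_lt j : (1 <= j <= s)%N ->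
  exists2 m, (j < m <= s.+1)%N & (#|F j :&: G j| < #|F m|)%N.
Proof.
move=> hj; have [Ffacet Gfacet GneF _] := G_branch hj.
have := Gfacet; rewrite facets_gen; last by apply: facets_from_antichain; lia.
case/facets_fromP => m hm Gm; exists m; last first.
  by rewrite -Gm setIC proper_card // (properI_facets Gfacet Ffacet).
have : m != j by apply: contraNneq GneF => eq_mj; rewrite Gm eq_mj.
lia.
Qed.

End LeafOrder.

Lemma size_le_count (T : eqType) (P : pred T) (r t : seq T) :
  uniq r -> {subset r <= t} -> all P r -> size r <= count P t.
Proof.
move=> uniq_r sub_rt /allP allP_r; rewrite -size_filter.
by apply: uniq_leq_size => // x xr; rewrite mem_filter allP_r ?sub_rt.
Qed.

Lemma homo_leq_range (f : nat -> nat) a b :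
  (forall i, a <= i < b -> f i <= f i.+1) ->
  forall i j, a <= i <= j -> j <= b -> f i <= f j.
Proof.
move=> f_step i j hij hjb.
apply: (@homo_leq_in _ [pred x | a <= x <= b] f leq) => //=.
- exact: leq_trans.
- by move=> x y /andP[? ?] /andP[? ?] z ?; rewrite inE; lia.
- by move=> x /andP[? ?] /andP[_ ?]; apply: f_step; lia.
- by rewrite inE; lia.
- by rewrite inE; lia.
- lia.
Qed.

Section SortedCardinalities.
Variables (s : nat) (delta e : nat -> nat).
Hypothesis e_lt_delta : forall i, 1 <= i <= s -> e i < delta i.
Hypothesis e_lt_delta_branch :
  forall i, 1 <= i <= s -> exists2 m, i < m <= s.+1 & e i < delta m.

Lemma count_e_lt_count_delta t :
  0 < count (fun i => t <= e i) (iota 1 s) ->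
  count (fun i => t <= e i) (iota 1 s) < count (fun i => t < delta i) (iota 1 s.+1).
Proof.
rewrite -has_count => /hasP[i0 i0_in le_t_i0].
have ub i : (i \in iota 1 s) && (t <= e i) -> i <= s.
  by case/andP; rewrite mem_iota; lia.
have [i /andP[i_in le_t_i] i_max] :=
  ex_maxnP (ex_intro _ i0 (introT andP (conj i0_in le_t_i0))) ub.
move: i_in; rewrite mem_iota => hi.
have [m hm lt_m] := e_lt_delta_branch (i := i) ltac:(lia).
rewrite -size_filter.
apply: (@size_le_count _ _ (m :: [seq x <- iota 1 s | t <= e x])).
- rewrite /= filter_uniq ?iota_uniq // andbT mem_filter mem_iota.
  apply/negP => /andP[le_t_m m_in].
  by have := i_max m; rewrite mem_iota m_in le_t_m; lia.
- by move=> x; rewrite inE mem_filter !mem_iota => /orP[/eqP ->|/andP[_ ?]]; lia.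
- rewrite /= (leq_ltn_trans le_t_i lt_m); apply/allP => x.
  rewrite mem_filter mem_iota => /andP[le_t_x hx].
  exact: leq_ltn_trans le_t_x (e_lt_delta hx).
Qed.

Lemma sorted_e_lt_delta (k l : nat -> nat) :
  {in [pred j : nat | 1 <= j <= s.+1]&, injective k} ->
  (forall j, 1 <= j <= s.+1 -> 1 <= k j <= s.+1) ->
  {in [pred j : nat | 1 <= j <= s]&, injective l} ->
  (forall j, 1 <= j <= s -> 1 <= l j <= s) ->
  (forall j, 1 <= j <= s -> delta (k j) <= delta (k j.+1)) ->
  (forall j, 1 <= j < s -> e (l j) <= e (l j.+1)) ->
  forall j, 1 <= j <= s -> e (l j) < delta (k j).
Proof.
move=> k_inj k_range l_inj l_range k_sorted l_sorted j hj.
rewrite ltnNge; apply/negP; set t := delta (k j) => le_t.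
have e_tail : (s - j).+1 <= count (fun i => t <= e i) (iota 1 s).
  rewrite -[X in X <= _](size_iota j) -(size_map l); apply: size_le_count.
  - rewrite map_inj_in_uniq ?iota_uniq // => x y; rewrite !mem_iota => hx hy.
    by apply: l_inj; rewrite inE /=; lia.
  - by move=> y /mapP[x]; rewrite !mem_iota => hx ->; have := l_range x; lia.
  - apply/allP => y /mapP[x]; rewrite mem_iota => hx ->.
    by apply: leq_trans le_t (homo_leq_range l_sorted _ _); lia.
have delta_head : j <= count (predC (fun i => t < delta i)) (iota 1 s.+1).
  rewrite -[X in X <= _](size_iota 1) -(size_map k); apply: size_le_count.
  - rewrite map_inj_in_uniq ?iota_uniq // => x y; rewrite !mem_iota => hx hy.
    by apply: k_inj; rewrite inE /=; lia.
  - by move=> y /mapP[x]; rewrite !mem_iota => hx ->; have := k_range x; lia.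
  - apply/allP => y /mapP[x]; rewrite mem_iota => hx ->.
    rewrite /= -leqNgt; apply: (@homo_leq_range (delta \o k) 1 s.+1); try lia.
    by move=> i hi; apply: k_sorted; lia.
have := count_e_lt_count_delta (t := t) ltac:(lia).
have := count_predC (fun i => t < delta i) (iota 1 s.+1); rewrite size_iota.
lia.
Qed.

End SortedCardinalities.

Local Open Scope ring_scope.

Theorem lemma2p1 (n s d : nat) (D : {set {set 'I_n}})
    (F G : nat -> {set 'I_n}) :
  is_quasi_forest D ->
  d = maxface D ->
  (* F_1, ..., F_{s+1} are the s+1 distinct facets of D *)
  {in [pred j : nat | (1 <= j <= s.+1)%N]&, injective F} ->
  (forall H, H \in facets D <-> exists2 j, (1 <= j <= s.+1)%N & H = F j) ->
  (* F_{s+1}, F_s, ..., F_1 is a leaf order with branches G_j *)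
  (forall j, (1 <= j <= s)%N ->
     is_branch (gen [set H : {set 'I_n} | [exists i : 'I_(s.+2), (j <= i)%N && (H == F i)]]) (F j) (G j)) ->
  let delta := fun j => #|F j| in
  let e := fun j => #|F j :&: G j| in
  (* (a) *)
  (\sum_(i < d.+1) (fm1 D i)%:R *: 'X^i : {poly int})
     = \sum_(1 <= j < s.+2) ('X + 1) ^+ delta j
       - \sum_(1 <= j < s.+1) ('X + 1) ^+ e j
  /\
  (* (b) *)
  (forall k l : nat -> nat,
     {in [pred j : nat | (1 <= j <= s.+1)%N]&, injective k} ->
     (forall j, (1 <= j <= s.+1)%N -> (1 <= k j <= s.+1)%N) ->
     {in [pred j : nat | (1 <= j <= s)%N]&, injective l} ->
     (forall j, (1 <= j <= s)%N -> (1 <= l j <= s)%N) ->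
     (0 < delta (k 1%N))%N ->
     (forall j, (1 <= j <= s)%N -> (delta (k j) <= delta (k j.+1))%N) ->
     delta (k s.+1) = d ->
     (forall j, (1 <= j < s)%N -> (e (l j) <= e (l j.+1))%N) ->
     forall j, (1 <= j <= s)%N -> (e (l j) < delta (k j))%N).
Proof.
move=> [[_ closedD] _] -> F_inj F_facets G_branch delta e; split.
  have /facetP[F1_face _] : F 1%N \in facets D by apply/F_facets; exists 1%N.
  have D0 : set0 \in D := closedD _ _ F1_face (sub0set _).
  rewrite -face_poly_fm1 // -(gen_facets closedD) (facets_from1 F_facets).
  exact: face_poly_facets_from.
move=> k l k_inj k_range l_inj l_range _ k_sorted _ l_sorted.
apply: sorted_e_lt_delta => // i hi.
- exact: leaf_cardI_lt G_branch i hi.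
- exact: branch_cardI_lt F_facets G_branch i hi.
Qed.
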